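(* Let $\mathcal{R}$ be a finite index set of regions. For each $\ell\in\mathcal{R}$ let $H_\ell\in\mathbb{R}^{N^x_\ell\times N^x_\ell}$ be symmetric, $J_\ell\in\mathbb{R}^{N^{E}_\ell\times N^x_\ell}$, and $A_\ell\in\mathbb{R}^{N^\lambda\times N^x_\ell}$. Set $N^x=\sum_{\ell\in\mathcal{R}}N^x_\ell$, $N^{E}=\sum_{\ell\in\mathcal{R}}N^{E}_\ell$, $H=\mathrm{blkdiag}(H_\ell)_{\ell\in\mathcal{R}}$, $J=\mathrm{blkdiag}(J_\ell)_{\ell\in\mathcal{R}}$, $A=[A_\ell]_{\ell\in\mathcal{R}}$ (horizontal concatenation), and let $$K=\begin{bmatrix} H & J^\top & A^\top\\ J & 0 & 0\\ A & 0 & 0\end{bmatrix}\in\mathbb{R}^{(N^x+N^{E}+N^\lambda)\times(N^x+N^{E}+N^\lambda)}.$$ For each $\ell$ define $\bar H_\ell=\begin{bmatrix} H_\ell & J_\ell^\top\\ J_\ell & 0\end{bmatrix}$ (assumed nonsingular), $\bar A_\ell=\begin{bmatrix} A_\ell & 0\end{bmatrix}$, and the dual Hessian $W=\sum_{\ell\in\mathcal{R}}\bigl(-\bar A_\ell\bar H_\ell^{-1}\bar A_\ell^\top\bigr)\in\mathbb{R}^{N^\lambda\times N^\lambda}$. Suppose the global Jacobian $\bar J=\begin{bmatrix} J\\ A\end{bmatrix}$ has full row rank and $$\mathrm{inertia}(W)=(N^x,\,N^{E}+N^\lambda,\,0)-\sum_{\ell\in\mathcal{R}}\mathrm{inertia}(\bar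 H_\ell)$$ (componentwise). Then $H$ is positive definite on the null space of $\bar J$, and the equality-constrained quadratic program $\min_{\Delta x}\ \tfrac12\Delta x^\top H\Delta x+g^\top\Delta x$ subject to $J\Delta x=r_1$, $A\Delta x=r_2$ (for any given vectors $g,r_1,r_2$ of compatible dimensions) has a strict local minimizer.
   Context: For a symmetric matrix $M$, $\mathrm{inertia}(M)=(n^+,n^-,n^0)$ denotes the numbers of positive, negative and zero eigenvalues of $M$, respectively; inertias are added and subtracted componentwise as triples of integers. *)

From HB Require Import structures.
From mathcomp Require Import all_boot all_order all_algebra.
From mathcomp Require Import boolp reals.
Set Implicit Arguments. Unset Strict Implicit. Unset Printing Implicit Defensive.
Import Order.TTheory GRing.Theory Num.Theory.
Local Open Scope ring_scope.

Section Inertia.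
Variable R : realType.

(* The eigenvalues of M, listed with algebraic multiplicity: a sequence s
   such that char_poly M = prod_(x <- s) ('X - x).  Such s exists for every
   real symmetric matrix (spectral theorem) and is unique up to permutation
   (unique factorization in {poly R}).  For a matrix whose characteristic
   polynomial does not split over R the value is the junk [::]; inertia is
   only ever applied to symmetric matrices below. *)
Definition eigenvalues_mult n (M : 'M[R]_n) : seq R :=
  match pselect (exists s : seq R, char_poly M = \prod_(x <- s) ('X - x%:P)) with
  | left ex => proj1_sig (cid ex)
  | right _ => [::]
  end.

Definition inertia_pos n (M : 'M[R]_n) : nat := count (fun x => 0 < x) (eigenvalues_mult M).
Definition inertia_neg n (M : 'M[R]_n) : nat := count (fun x => x < 0) (eigenvalues_mult M).
Definition inertia_zero n (M : 'M[R]_n) : nat := count (fun x => x == 0) (eigenvalues_mult M).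

Definition blkdiag_rect r (p q : 'I_r -> nat) (B : forall l, 'M[R]_(p l, q l))
  : 'M[R]_(\sum_(l < r) p l, \sum_(l < r) q l) :=
  \mxblock_(i < r, j < r) (if i == j then conform_mx 0 (B i) else 0).

Definition strict_local_minimizer n (f : 'cV[R]_n -> R) (F : 'cV[R]_n -> Prop)
  (x : 'cV[R]_n) : Prop :=
  F x /\ exists eps : R, 0 < eps /\
    forall y, F y -> y != x -> \sum_(i < n) (y i 0 - x i 0) ^+ 2 < eps ->
      f x < f y.

End Inertia.

From HB Require Import structures.
From mathcomp Require Import all_boot all_order all_algebra.
From mathcomp Require Import boolp reals complex ring lra.
Import Order.TTheory GRing.Theory Num.Theory.
Local Open Scope ring_scope.

(* Let p_l and p_W be the numbers of positive eigenvalues of Hbar_l and W; the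
   hypothesis on inertia(W) says p_W + sum_l p_l = N^x.  Take v = (v_l) <> 0 with
   J v = 0 and A v = 0, and subspaces E_l, E_W of dimensions p_l, p_W on which the
   forms of Hbar_l and W are positive definite.  Requiring the x-block of
   a_l E_l - b E_W Abar_l Hbar_l^-1 to equal t v_l for all l imposes N^x linear
   conditions on p_W + sum_l p_l + 1 unknowns (a_l, b, t), so a nonzero solution
   exists.  With mu = b E_W and z_l = a_l E_l - mu Abar_l Hbar_l^-1, the form of the
   bordered matrix [Hbar_l Abar_l^*; Abar_l 0] at (z_l, mu) is, by the Schur
   complement identity, (a_l E_l) Hbar_l (a_l E_l)^* - mu Abar_l Hbar_l^-1 Abar_l^* mu^*,
   and, as J_l v_l = 0, it is also |t|^2 v_l^T H_l v_l plus cross terms that cancel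
   in the sum over l because sum_l A_l v_l = 0.  Hence
     sum_l (a_l E_l) Hbar_l (a_l E_l)^* + mu W mu^* = |t|^2 v^T H v,
   so v^T H v <= 0 would force a = b = 0, then z = 0, t v = 0 and t = 0.
   The subspaces come from the spectral theorem, which MathComp proves over an
   algebraically closed field; the argument is therefore run with Hermitian forms
   over R[i].
   Given positive definiteness on ker Jbar and full row rank of Jbar, the KKT matrix
   [H Jbar^T; Jbar 0] is invertible; its solution dx is feasible and stationary, and
   f(dx + d) = f(dx) + d^T H d / 2 for every feasible direction d. *)

Section BlockDiagonal.
Set Implicit Arguments. Unset Strict Implicit. Unset Printing Implicit Defensive.
Variable R : pzSemiRingType.

(* The [blkdiag_rect] of the definitions, over any semiring: it is also used over R[i]. *)
Definition blkdiag_mx r (p q : 'I_r -> nat) (B : forall l, 'M[R]_(p l, q l))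
  : 'M[R]_(\sum_(l < r) p l, \sum_(l < r) q l) :=
  \mxblock_(i < r, j < r) (if i == j then conform_mx 0 (B i) else 0).

Lemma mul_mx_blkdiag r (p q : 'I_r -> nat) m (B : forall l, 'M[R]_(p l, q l))
    (a : 'M[R]_(m, \sum_(l < r) p l)) :
  a *m blkdiag_mx B = \mxrow_l (submxrow a l *m B l).
Proof.
rewrite -{1}[a]submxrowK mul_mxrow_mxblock; apply: eq_mxrow => j.
rewrite (bigD1 j) //= eqxx conform_mx_id big1 ?addr0 // => i /negbTE ->.
by rewrite mulmx0.
Qed.

Lemma mul_blkdiag_mxcol r (p q : 'I_r -> nat) m (B : forall l, 'M[R]_(p l, q l))
    (c : forall l, 'M[R]_(q l, m)) :
  blkdiag_mx B *m \mxcol_l c l = \mxcol_l (B l *m c l).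
Proof.
rewrite mul_mxblock_mxrow; apply: eq_mxcol => i.
rewrite (bigD1 i) //= eqxx conform_mx_id big1 ?addr0 // => j.
by rewrite eq_sym => /negbTE ->; rewrite mul0mx.
Qed.

End BlockDiagonal.

Lemma exists_nontrivial_solution (F : fieldType) r (k p : 'I_r -> nat) q
    (G : forall l, 'M[F]_(p l, k l)) (Gw : forall l, 'M[F]_(q, k l))
    (v : forall l, 'rV[F]_(k l)) :
  (\sum_(l < r) p l + q)%N = \sum_(l < r) k l ->
  exists (a : 'rV_(\sum_(l < r) p l)) (b : 'rV_q) (t : F),
    [|| a != 0, b != 0 | t != 0] /\
    forall l, submxrow a l *m G l + b *m Gw l = t *: v l.
Proof.
move=> dim.
pose M := col_mx (col_mx (blkdiag_mx G) (\mxrow_l Gw l)) (- \mxrow_l v l).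
have : ~~ row_free M.
  apply/negP => /eqP rkM; have := rank_leq_col M.
  by rewrite rkM -dim addn1 ltnn.
rewrite -kermx_eq0 => /rowV0Pn [x /sub_kermxP xM x_neq0].
set a := lsubmx (lsubmx x); set b := rsubmx (lsubmx x); set t := rsubmx x 0 0.
have xE : x = row_mx (row_mx a b) t%:M by rewrite -mx11_scalar !hsubmxK.
exists a, b, t; split.
  apply: contraNT x_neq0; rewrite !negb_or !negbK xE.
  by case/and3P => [/eqP-> /eqP-> /eqP->]; rewrite raddf0 !row_mx0.
move=> l; move: xM.
rewrite xE !mul_row_col mul_mx_blkdiag mulmxN !mul_mxrow -mxrowN -!mxrowD.
move=> /(congr1 (fun X => submxrow X l)); rewrite mxrowK submxrow0 mul_scalar_mx.
by move/eqP; rewrite subr_eq0 => /eqP.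
Qed.

Section HermitianForms.
Set Implicit Arguments. Unset Strict Implicit. Unset Printing Implicit Defensive.
Local Open Scope sesquilinear_scope.
Variable C : numClosedFieldType.

Lemma trmxC_mul m n p (A : 'M[C]_(m, n)) (B : 'M[C]_(n, p)) :
  (A *m B)^t* = B^t* *m A^t*.
Proof. by rewrite trmx_mul map_mxM. Qed.

Lemma trmxCB m n (A B : 'M[C]_(m, n)) : (A - B)^t* = A^t* - B^t*.
Proof. by rewrite linearB /= map_mxB. Qed.

Lemma trmxCZ m n (a : C) (A : 'M[C]_(m, n)) : (a *: A)^t* = a^* *: A^t*.
Proof. by apply/matrixP => i j; rewrite !mxE rmorphM. Qed.

Lemma invmx_hermitian n (M : 'M[C]_n) : M^t* = M -> (invmx M)^t* = invmx M.
Proof. by move=> MH; rewrite trmx_inv map_invmx MH. Qed.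

Definition hform n (M : 'M[C]_n) (x : 'rV[C]_n) : C := (x *m M *m x^t*) 0 0.

Definition posdef_on p n (E : 'M[C]_(p, n)) (M : 'M[C]_n) :=
  forall a : 'rV_p, a != 0 -> 0 < hform M (a *m E).

Lemma hform_real n (M : 'M[C]_n) x : M^t* = M -> hform M x \is Num.real.
Proof.
move=> MH; apply/CrealP; rewrite /hform.
have -> : ((x *m M *m x^t*) 0 0)^* = ((x *m M *m x^t*)^t*) 0 0 by rewrite !mxE.
by rewrite !trmxC_mul trmxCK MH mulmxA.
Qed.

Lemma hform_mulmx p n (M : 'M[C]_n) (E : 'M[C]_(p, n)) a :
  hform M (a *m E) = hform (E *m M *m E^t*) a.
Proof. by rewrite /hform trmxC_mul !mulmxA. Qed.

Lemma hform_diag_gt0 n (d : 'rV[C]_n) a :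
  (forall i, 0 < d 0 i) -> a != 0 -> 0 < hform (diag_mx d) a.
Proof.
move=> d_gt0 /rV0Pn [k ak_neq0].
have -> : hform (diag_mx d) a = \sum_i d 0 i * (a 0 i * (a 0 i)^*).
  rewrite /hform mul_mx_diag mxE; apply: eq_bigr => i _.
  by rewrite !mxE mulrAC mulrC.
rewrite (bigD1 k) //= ltr_wpDr ?sumr_ge0 // => [i _|].
  exact: mulr_ge0 (ltW (d_gt0 i)) (mul_conjC_ge0 _).
by rewrite mulr_gt0 // mul_conjC_gt0.
Qed.

Lemma posdef_on_ge0 p n (E : 'M[C]_(p, n)) M a :
  posdef_on E M -> 0 <= hform M (a *m E).
Proof.
move=> EM; have [->|/EM/ltW //] := eqVneq a 0.
by rewrite /hform !mul0mx mxE.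
Qed.

Lemma posdef_on_eq0 p n (E : 'M[C]_(p, n)) M a :
  posdef_on E M -> hform M (a *m E) <= 0 -> a = 0.
Proof.
move=> EM a_le0; apply/eqP; apply/negP => /negP/EM a_gt0.
by rewrite (lt_geF a_gt0) in a_le0.
Qed.

Definition bordered_mx n k (P : 'M[C]_n) (Q : 'M[C]_(k, n)) : 'M[C]_(n + k) :=
  block_mx P (Q^t*) Q 0.

Lemma bordered_mx_herm n k (P : 'M[C]_n) (Q : 'M[C]_(k, n)) :
  P^t* = P -> (bordered_mx P Q)^t* = bordered_mx P Q.
Proof.
by move=> PH; rewrite /bordered_mx tr_block_mx map_block_mx PH trmxCK trmx0 map_mx0.
Qed.

Lemma hform_bordered n k (P : 'M[C]_n) (Q : 'M[C]_(k, n)) x y :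
  hform (bordered_mx P Q) (row_mx x y) =
  hform P x + (y *m Q *m x^t*) 0 0 + (x *m (y *m Q)^t*) 0 0.
Proof.
rewrite /hform tr_row_mx map_col_mx mul_row_block mul_row_col mulmx0 addr0.
by rewrite mulmxDl trmxC_mul mulmxA ![fun_of_matrix (_ + _) _ _]mxE.
Qed.

Lemma hform_bordered_schur n k (Hb : 'M[C]_n) (Ab : 'M[C]_(k, n)) w mu :
  Hb^t* = Hb -> Hb \in unitmx ->
  hform (bordered_mx Hb Ab) (row_mx (w - mu *m Ab *m invmx Hb) mu) =
  hform Hb w - hform (Ab *m invmx Hb *m Ab^t*) mu.
Proof.
move=> HbH Hb_unit; rewrite hform_bordered /hform.
set X := mu *m Ab *m invmx Hb; set Y := mu *m Ab.
have XHb : X *m Hb = Y by rewrite /X -mulmxA mulVmx // mulmx1.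
have HbX : Hb *m X^t* = Y^t*.
  by rewrite /X trmxC_mul invmx_hermitian // mulmxA mulmxV // mul1mx.
have -> : mu *m (Ab *m invmx Hb *m Ab^t*) *m mu^t* = Y *m X^t*.
  by rewrite /X /Y !trmxC_mul invmx_hermitian // !mulmxA.
have XY : X *m Y^t* = Y *m X^t* by rewrite -HbX mulmxA XHb.
rewrite trmxCB !mulmxBl !mulmxBr XHb -[w *m Hb *m X^t*]mulmxA HbX XY.
do 2 rewrite ![fun_of_matrix (_ + _) _ _]mxE ![fun_of_matrix (- _) _ _]mxE.
ring.
Qed.

Lemma hform_bordered_null nx ne k (H : 'M[C]_nx) (J : 'M[C]_(ne, nx))
    (A : 'M[C]_(k, nx)) (t : C) v y mu :
  J *m v^t* = 0 ->
  hform (bordered_mx (bordered_mx H J) (row_mx A 0)) (row_mx (row_mx (t *: v) y) mu) =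
  t * t^* * hform H v + t^* * (mu *m A *m v^t*) 0 0 + t * (v *m (mu *m A)^t*) 0 0.
Proof.
move=> Jv; have vJ : v *m J^t* = 0 by rewrite -[v]trmxCK -trmxC_mul Jv trmx0 map_mx0.
rewrite !hform_bordered /hform mul_mx_row mulmx0 tr_row_mx map_col_mx mul_row_col.
rewrite trmxCZ tr_row_mx map_col_mx mul_row_col trmx0 map_mx0 !mulmx0 !addr0.
rewrite mul0mx addr0 trmxCZ trmxC_mul -!scalemxAr -!scalemxAl.
rewrite -[y *m J *m _]mulmxA Jv mulmxA vJ !mul0mx !mulmx0 !scaler0.
rewrite ![fun_of_matrix 0 _ _]mxE !addr0 ![fun_of_matrix (_ *: _) _ _]mxE.
by rewrite mulrA [t^* * t]mulrC.
Qed.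

End HermitianForms.

Section InertiaCounting.
Set Implicit Arguments. Unset Strict Implicit. Unset Printing Implicit Defensive.
Local Open Scope sesquilinear_scope.
Variables (C : numClosedFieldType) (r : nat) (Nx NE : 'I_r -> nat) (m : nat).
Variables (H : forall l, 'M[C]_(Nx l)) (J : forall l, 'M[C]_(NE l, Nx l)).
Variable A : forall l, 'M[C]_(m, Nx l).

Local Notation Hbar l := (bordered_mx (H l) (J l)).
Local Notation Abar l := (row_mx (A l) (0 : 'M[C]_(m, NE l))).
Local Notation W := (\sum_(l < r) - (Abar l *m invmx (Hbar l) *m (Abar l)^t*)).

Hypothesis H_herm : forall l, (H l)^t* = H l.
Hypothesis Hbar_unit : forall l, Hbar l \in unitmx.

Lemma sum_hform_bordered_schur (w : forall l, 'rV[C]_(Nx l + NE l)) (mu : 'rV[C]_m) :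
  \sum_(l < r) hform (bordered_mx (Hbar l) (Abar l))
                 (row_mx (w l - mu *m Abar l *m invmx (Hbar l)) mu) =
  \sum_(l < r) hform (Hbar l) (w l) + hform W mu.
Proof.
under eq_bigr do rewrite hform_bordered_schur ?bordered_mx_herm //.
rewrite sumrB; congr (_ + _).
rewrite /hform mulmx_sumr mulmx_suml summxE -sumrN; apply: eq_bigr => l _.
by rewrite mulmxN (mulNmx (mu *m _)) [fun_of_matrix (- _) _ _]mxE.
Qed.

Lemma sum_hform_bordered_null (t : C) (v : forall l, 'rV[C]_(Nx l))
    (y : forall l, 'rV[C]_(NE l)) (mu : 'rV[C]_m) :
  (forall l, J l *m (v l)^t* = 0) -> \sum_(l < r) A l *m (v l)^t* = 0 ->
  \sum_(l < r) hform (bordered_mx (Hbar l) (Abar l))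
                 (row_mx (row_mx (t *: v l) (y l)) mu) =
  t * t^* * \sum_(l < r) hform (H l) (v l).
Proof.
move=> Jv Av; under eq_bigr do rewrite hform_bordered_null //.
have cross : \sum_l (mu *m A l *m (v l)^t*) 0 0 = 0.
  rewrite -summxE; under eq_bigr do rewrite -mulmxA.
  by rewrite -mulmx_sumr Av mulmx0 mxE.
have cross' : \sum_l (v l *m (mu *m A l)^t*) 0 0 = 0.
  rewrite -[RHS]conjC0 -[in RHS]cross rmorph_sum; apply: eq_bigr => l _.
  rewrite [RHS](_ : _ = ((mu *m A l *m (v l)^t*)^t*) 0 0); last by rewrite !mxE.
  by rewrite !trmxC_mul trmxCK.
by rewrite !big_split /= -!mulr_sumr cross cross' !mulr0 !addr0.
Qed.

Lemma nullspace_hform_gt0 (p : 'I_r -> nat) (E : forall l, 'M[C]_(p l, Nx l + NE l))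
    (pW : nat) (EW : 'M[C]_(pW, m)) (v : forall l, 'rV[C]_(Nx l)) :
  (\sum_(l < r) p l + pW)%N = \sum_(l < r) Nx l ->
  (forall l, posdef_on (E l) (Hbar l)) -> posdef_on EW W ->
  (forall l, J l *m (v l)^t* = 0) -> \sum_(l < r) A l *m (v l)^t* = 0 ->
  (exists l, v l != 0) -> 0 < \sum_(l < r) hform (H l) (v l).
Proof.
move=> dim E_pos EW_pos Jv Av [l0 vl0_neq0].
have [a [b [t [abt_neq0 sol]]]] := exists_nontrivial_solution
  (fun l => lsubmx (E l)) (fun l => - lsubmx (EW *m Abar l *m invmx (Hbar l))) v dim.
set mu := b *m EW; pose w l := submxrow a l *m E l.
pose z l := w l - mu *m Abar l *m invmx (Hbar l).
have zl l : lsubmx (z l) = t *: v l.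
  by rewrite -sol mulmxN !mulmx_lsub !mulmxA linearB.
have sumE : \sum_l hform (Hbar l) (w l) + hform W mu =
            t * t^* * \sum_l hform (H l) (v l).
  rewrite -sum_hform_bordered_schur
    -(sum_hform_bordered_null t (fun l => rsubmx (z l)) mu Jv Av).
  by apply: eq_bigr => l _; rewrite -zl hsubmxK.
have S_real : \sum_l hform (H l) (v l) \is Num.real.
  by apply: rpred_sum => l _; apply: hform_real.
rewrite real_ltNge ?real0 //; apply/negP => S_le0.
have sum_le0 : \sum_l hform (Hbar l) (w l) + hform W mu <= 0.
  by rewrite sumE mulr_ge0_le0 // mul_conjC_ge0.
have w_ge0 l : 0 <= hform (Hbar l) (w l) by apply: posdef_on_ge0.
have b0 : b = 0.
  apply: posdef_on_eq0 EW_pos (le_trans _ sum_le0).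
  by rewrite -/mu lerDr sumr_ge0.
have a0 l : submxrow a l = 0.
  apply: posdef_on_eq0 (E_pos l) (le_trans _ sum_le0).
  rewrite (bigD1 l) //= -addrA -/(w l) lerDl.
  by rewrite addr_ge0 ?sumr_ge0 ?(posdef_on_ge0 _ EW_pos).
have t0 : t = 0.
  have := zl l0; rewrite /z /w a0 /mu b0 !mul0mx subrr linear0 => /esym/eqP.
  by rewrite scaler_eq0 (negbTE vl0_neq0) orbF => /eqP.
move: abt_neq0; rewrite b0 t0 -[a]submxrowK.
by under eq_mxrow do rewrite a0; rewrite mxrow0 !eqxx.
Qed.

End InertiaCounting.

Lemma char_poly_similar (F : fieldType) n (P D : 'M[F]_n) : P \in unitmx ->
  char_poly (invmx P *m D *m P) = char_poly D.
Proof.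
move=> P_unit; rewrite /char_poly /char_poly_mx.
have XE : ('X%:M : 'M[{poly F}]_n) = map_mx polyC (invmx P) *m 'X%:M *m map_mx polyC P.
  by rewrite mul_mx_scalar -scalemxAl -map_mxM mulVmx // map_mx1 scalemx1.
rewrite {1}XE !map_mxM -mulmxBl -mulmxBr !det_mulmx mulrC mulrA -det_mulmx -map_mxM.
by rewrite mulmxV // map_mx1 det1 mul1r.
Qed.

Section RealSymmetric.
Set Implicit Arguments. Unset Strict Implicit. Unset Printing Implicit Defensive.
Local Open Scope sesquilinear_scope.
Variable R : realType.
Local Notation cR := (real_complex R).

Lemma map_real_trmxC m n (M : 'M[R]_(m, n)) : (map_mx cR M)^t* = map_mx cR M^T.
Proof.
by apply/matrixP => i j; rewrite !mxE conj_Creal //= complex_real.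
Qed.

Lemma hform_map_real n (M : 'M[R]_n) (x : 'rV[R]_n) :
  hform (map_mx cR M) (map_mx cR x) = cR ((x *m M *m x^T) 0 0).
Proof.
have -> : cR ((x *m M *m x^T) 0 0) = (map_mx cR x *m map_mx cR M *m map_mx cR x^T) 0 0.
  by rewrite -!map_mxM [RHS]mxE.
(* Rewriting with map_real_trmxC fails here: the two sides use different but
   convertible canonical structures on R[i]. *)
apply: (congr1 (fun X => (map_mx cR x *m map_mx cR M *m X) 0 0)).
exact: map_real_trmxC.
Qed.

Lemma map_real_bordered n k (H : 'M[R]_n) (J : 'M[R]_(k, n)) :
  map_mx cR (block_mx H J^T J 0) = bordered_mx (map_mx cR H) (map_mx cR J).
Proof.
rewrite map_block_mx map_mx0 /bordered_mx; congr block_mx.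
by rewrite map_real_trmxC.
Qed.

Lemma inertia_pos_char_poly n (M : 'M[R]_n) (d : 'rV[R[i]]_n) :
  d \is a realmx -> char_poly (map_mx cR M) = \prod_i ('X - (d 0 i)%:P) ->
  inertia_pos M = #|[pred i | 0 < d 0 i]|.
Proof.
move=> d_real Mc_char; have Re_d i := RRe_real (mxOverP d_real 0 i).
set s := [seq complex.Re (d 0 i) | i <- index_enum 'I_n].
have M_char : char_poly M = \prod_(x <- s) ('X - x%:P).
  apply: (@map_poly_inj _ _ cR); rewrite map_char_poly Mc_char rmorph_prod big_map.
  by apply: eq_bigr => i _; rewrite /= map_polyXsubC /= Re_d.
rewrite /inertia_pos /eigenvalues_mult; case: pselect => [ex|]; last by case; exists s.
case: (cid ex) => s' /= s'_char.
rewrite (permP (prod_XsubC_eq (etrans (esym s'_char) M_char))) count_map.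
rewrite -sum1_count -sum1_card; apply: eq_bigl => i.
by rewrite !inE -ltcR Re_d.
Qed.

Lemma posdef_subspace n (M : 'M[R]_n) : M^T = M ->
  {E : 'M[R[i]]_(inertia_pos M, n) | posdef_on E (map_mx cR M)}.
Proof.
move=> M_sym; set Mc := map_mx cR M.
have Mc_herm : Mc \is hermsymmx.
  apply: realsym_hermsym; last by apply/mxOverP => i j; rewrite mxE /= complex_real.
  by apply/is_hermitianmxP; rewrite expr0 scale1r map_mx_id // /Mc map_trmx M_sym.
set P := spectralmx Mc; set d := spectral_diag Mc.
have McE : Mc = invmx P *m diag_mx d *m P by apply/orthomx_spectralP/hermitian_normalmx.
have P_unitary : P \is unitarymx by apply: spectral_unitarymx.
rewrite (@inertia_pos_char_poly _ _ d); last 2 first.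
- exact: hermitian_spectral_diag_real.
- rewrite -/Mc McE char_poly_similar ?spectral_unit // char_poly_trig ?diag_mx_is_trig //.
  by apply: eq_bigr => i _; rewrite mxE eqxx mulr1n.
pose f : 'I_#|[pred i | 0 < d 0 i]| -> 'I_n := enum_val.
exists (rowsub f P) => a a_neq0; rewrite hform_mulmx.
have -> : rowsub f P *m Mc *m (rowsub f P)^t* = diag_mx (colsub f d).
  rewrite mul_rowsub_mx trmx_mxsub map_mxsub -mxsub_mul McE invmx_unitary //.
  rewrite !mulmxA mulmxtVK // (unitarymxP P_unitary) mul1mx.
  apply/matrixP => i j; rewrite !mxE (inj_eq enum_val_inj).
  by case: eqP => [->|]; rewrite ?mulr1n ?mulr0n.
by apply: hform_diag_gt0 a_neq0 => k; rewrite mxE; apply: (enum_valP k).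
Qed.

Lemma blocks_nullspace_posdef r (Nx NE : 'I_r -> nat) m (Hl : forall l, 'M[R]_(Nx l))
    (Jl : forall l, 'M[R]_(NE l, Nx l)) (Al : forall l, 'M[R]_(m, Nx l))
    (v : forall l, 'cV[R]_(Nx l)) :
  (forall l, (Hl l)^T = Hl l) ->
  let Hbar l := block_mx (Hl l) (Jl l)^T (Jl l) 0 in
  let Abar l : 'M[R]_(m, Nx l + NE l) := row_mx (Al l) 0 in
  let W := \sum_(l < r) - (Abar l *m invmx (Hbar l) *m (Abar l)^T) in
  (forall l, Hbar l \in unitmx) ->
  (\sum_(l < r) inertia_pos (Hbar l) + inertia_pos W)%N = \sum_(l < r) Nx l ->
  (forall l, Jl l *m v l = 0) -> \sum_(l < r) Al l *m v l = 0 -> (exists l, v l != 0) ->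
  0 < \sum_(l < r) ((v l)^T *m Hl l *m v l) 0 0.
Proof.
move=> H_sym Hbar Abar W Hbar_unit dim Jv Av [l0 vl0_neq0].
have Hbar_sym l : (Hbar l)^T = Hbar l by rewrite /Hbar tr_block_mx trmxK H_sym trmx0.
have W_sym : W^T = W.
  rewrite /W linear_sum; apply: eq_bigr => l _.
  by rewrite linearN /= !trmx_mul trmxK trmx_inv Hbar_sym mulmxA.
have map_Hbar l : map_mx cR (Hbar l) = bordered_mx (map_mx cR (Hl l)) (map_mx cR (Jl l)).
  exact: map_real_bordered.
have Hc_herm l : (map_mx cR (Hl l))^t* = map_mx cR (Hl l).
  by rewrite map_real_trmxC H_sym.
have Hbarc_unit l : bordered_mx (map_mx cR (Hl l)) (map_mx cR (Jl l)) \in unitmx.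
  by rewrite -map_Hbar map_unitmx.
pose E l := sval (posdef_subspace (Hbar_sym l)).
have E_pos l : posdef_on (E l) (bordered_mx (map_mx cR (Hl l)) (map_mx cR (Jl l))).
  by rewrite -map_Hbar; exact: (svalP (posdef_subspace (Hbar_sym l))).
have [EW] := posdef_subspace W_sym.
have -> : map_mx cR W = \sum_l - (row_mx (map_mx cR (Al l)) 0 *m
    invmx (bordered_mx (map_mx cR (Hl l)) (map_mx cR (Jl l))) *m
    (row_mx (map_mx cR (Al l)) 0)^t*).
  rewrite raddf_sum; apply: eq_bigr => l _.
  by rewrite raddfN /= !map_mxM map_invmx map_Hbar -map_real_trmxC map_row_mx map_mx0.
move=> EW_pos.
have Jvc l : map_mx cR (Jl l) *m (map_mx cR (v l)^T)^t* = 0.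
  by rewrite map_real_trmxC trmxK -map_mxM Jv map_mx0.
have Avc : \sum_l map_mx cR (Al l) *m (map_mx cR (v l)^T)^t* = 0.
  under eq_bigr do rewrite map_real_trmxC trmxK -map_mxM.
  by rewrite -raddf_sum /= Av map_mx0.
have vc_neq0 : exists l, map_mx cR (v l)^T != 0.
  by exists l0; rewrite map_mx_eq0 trmx_eq0.
have := nullspace_hform_gt0 Hc_herm Hbarc_unit dim E_pos EW_pos Jvc Avc vc_neq0.
rewrite (eq_bigr (fun l => cR (((v l)^T *m Hl l *m v l) 0 0))); last first.
  by move=> l _; rewrite hform_map_real trmxK.
by rewrite -rmorph_sum -(rmorph0 cR) ltcR.
Qed.

Lemma nullspace_posdef r (Nx NE : 'I_r -> nat) m (Hl : forall l, 'M[R]_(Nx l))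
    (Jl : forall l, 'M[R]_(NE l, Nx l)) (Al : forall l, 'M[R]_(m, Nx l)) :
  (forall l, (Hl l)^T = Hl l) ->
  let Hbar l := block_mx (Hl l) (Jl l)^T (Jl l) 0 in
  let Abar l : 'M[R]_(m, Nx l + NE l) := row_mx (Al l) 0 in
  let W := \sum_(l < r) - (Abar l *m invmx (Hbar l) *m (Abar l)^T) in
  (forall l, Hbar l \in unitmx) ->
  (\sum_(l < r) inertia_pos (Hbar l) + inertia_pos W)%N = \sum_(l < r) Nx l ->
  forall v : 'cV[R]_(\sum_(l < r) Nx l),
    col_mx (blkdiag_rect Jl) (\mxrow_l Al l) *m v = 0 -> v != 0 ->
    0 < (v^T *m \mxdiag_l Hl l *m v) 0 0.
Proof.
move=> H_sym Hbar Abar W Hbar_unit dim v.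
rewrite mul_col_mx => /eqP; rewrite col_mx_eq0 => /andP [/eqP Jv /eqP Av] v_neq0.
pose vl l := submxcol v l; have vE : v = \mxcol_l vl l by rewrite submxcolK.
rewrite {1 2}vE tr_mxcol mul_mxrow_mxdiag mul_mxrow_mxcol summxE.
apply: blocks_nullspace_posdef H_sym Hbar_unit dim _ _ _ => [l||].
- have := congr1 (fun X => submxcol X l) Jv.
  by rewrite /= {1}vE mul_blkdiag_mxcol mxcolK submxcol0.
- by rewrite -mul_mxrow_mxcol -vE.
apply/existsP; apply: contraNT v_neq0; rewrite negb_exists => /forallP vl0.
by rewrite vE (eq_mxcol (fun l => eqP (negbNE (vl0 l)))) mxcol0.
Qed.

End RealSymmetric.

Lemma kkt_unitmx (R : numFieldType) n k (H : 'M[R]_n) (B : 'M[R]_(k, n)) :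
  (forall v : 'cV_n, B *m v = 0 -> v != 0 -> 0 < (v^T *m H *m v) 0 0) -> row_free B ->
  block_mx H B^T B 0 \in unitmx.
Proof.
move=> H_pos B_free; rewrite -row_free_unit; apply/inj_row_free => u.
rewrite -[u]hsubmxK; move: (lsubmx u) (rsubmx u) => x y.
rewrite mul_row_block mulmx0 addr0 => /eqP.
rewrite row_mx_eq0 => /andP [/eqP xHyB /eqP xBT].
have Bx : B *m x^T = 0 by rewrite -[B]trmxK -trmx_mul xBT trmx0.
have x0 : x = 0.
  apply/eqP; apply: contraT => x_neq0.
  have := H_pos _ Bx; rewrite trmx_eq0 trmxK => /(_ x_neq0).
  have -> : x *m H = - (y *m B) by apply/eqP; rewrite -addr_eq0 xHyB.
  by rewrite (mulNmx (y *m B)) -mulmxA Bx mulmx0 oppr0 mxE ltxx.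
have y0 : y = 0.
  by move: xHyB; rewrite x0 mul0mx add0r => /eqP; rewrite mulmx_free_eq0 // => /eqP.
by rewrite x0 y0 row_mx0.
Qed.

Lemma quad_formD (R : comPzRingType) n (H : 'M[R]_n) (x d : 'cV[R]_n) : H^T = H ->
  ((x + d)^T *m H *m (x + d)) 0 0 =
  (x^T *m H *m x) 0 0 + 2 * (x^T *m H *m d) 0 0 + (d^T *m H *m d) 0 0.
Proof.
move=> H_sym; have dHx : (d^T *m H *m x) 0 0 = (x^T *m H *m d) 0 0.
  have -> : d^T *m H *m x = (x^T *m H *m d)^T by rewrite !trmx_mul trmxK H_sym mulmxA.
  by rewrite mxE.
rewrite [(x + d)^T]linearD /= !mulmxDl !mulmxDr ![fun_of_matrix (_ + _) _ _]mxE dHx.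
ring.
Qed.

Lemma qp_strict_local_minimizer (R : realType) n k (H : 'M[R]_n) (B : 'M[R]_(k, n))
    (g : 'cV[R]_n) (c : 'cV[R]_k) (F : 'cV[R]_n -> Prop) :
  H^T = H -> (forall v : 'cV_n, B *m v = 0 -> v != 0 -> 0 < (v^T *m H *m v) 0 0) ->
  row_free B -> (forall x, F x <-> B *m x = c) ->
  exists dx, strict_local_minimizer
    (fun x => 2^-1 * (x^T *m H *m x) 0 0 + (g^T *m x) 0 0) F dx.
Proof.
move=> H_sym H_pos B_free FE.
pose sol := invmx (block_mx H B^T B 0) *m col_mx (- g) c.
have : block_mx H B^T B 0 *m col_mx (usubmx sol) (dsubmx sol) = col_mx (- g) c.
  by rewrite vsubmxK mulKVmx // kkt_unitmx.
set dx := usubmx sol; set lam := dsubmx sol.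
rewrite mul_block_col mul0mx addr0 => /eq_col_mx [stationary feasible].
exists dx; split; first exact/FE.
exists 1; split => // y /FE + y_neq_dx _.
have [d yE] : exists d, y = dx + d by exists (y - dx); rewrite addrC subrK.
rewrite {}yE in y_neq_dx * => Bdxd.
have Bd : B *m d = 0.
  move: Bdxd; rewrite mulmxDr feasible => /(congr1 (fun z => z - c)).
  by rewrite addrAC subrr add0r.
have d_neq0 : d != 0 by apply: contraNneq y_neq_dx => ->; rewrite addr0.
have cross : (dx^T *m H *m d) 0 0 = - (g^T *m d) 0 0.
  have -> : dx^T *m H = (- g - B^T *m lam)^T by rewrite -stationary addrK trmx_mul H_sym.
  rewrite raddfB /= raddfN /= trmx_mul trmxK mulmxBl mulNmx -mulmxA Bd mulmx0 subr0.
  by rewrite mxE.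
rewrite quad_formD // mulmxDr [fun_of_matrix (_ + _) _ _]mxE cross.
have := H_pos d Bd d_neq0; lra.
Qed.

Theorem corollary1 (R : realType) (r : nat) (Nx NE : 'I_r -> nat) (Nlam : nat)
  (Hl : forall l, 'M[R]_(Nx l)) (Jl : forall l, 'M[R]_(NE l, Nx l))
  (Al : forall l, 'M[R]_(Nlam, Nx l)) :
  (forall l, (Hl l)^T = Hl l) ->
  let H : 'M[R]_(\sum_(l < r) Nx l) := \mxdiag_(l < r) Hl l in
  let J : 'M[R]_(\sum_(l < r) NE l, \sum_(l < r) Nx l) := blkdiag_rect Jl in
  let A : 'M[R]_(Nlam, \sum_(l < r) Nx l) := \mxrow_(l < r) Al l in
  let Hbar l : 'M[R]_(Nx l + NE l) := block_mx (Hl l) (Jl l)^T (Jl l) 0 in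
  let Abar l : 'M[R]_(Nlam, Nx l + NE l) := row_mx (Al l) 0 in
  let W : 'M[R]_Nlam := \sum_(l < r) - (Abar l *m invmx (Hbar l) *m (Abar l)^T) in
  let Jbar := col_mx J A in
  (forall l, Hbar l \in unitmx) ->
  row_free Jbar ->
  (inertia_pos W)%:Z = (\sum_(l < r) Nx l)%:Z - \sum_(l < r) (inertia_pos (Hbar l))%:Z ->
  (inertia_neg W)%:Z = (\sum_(l < r) NE l + Nlam)%:Z - \sum_(l < r) (inertia_neg (Hbar l))%:Z ->
  (inertia_zero W)%:Z = 0 - \sum_(l < r) (inertia_zero (Hbar l))%:Z ->
  (forall v : 'cV[R]_(\sum_(l < r) Nx l), Jbar *m v = 0 -> v != 0 ->
      0 < (v^T *m H *m v) 0 0) /\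
  (forall (g : 'cV[R]_(\sum_(l < r) Nx l)) (r1 : 'cV[R]_(\sum_(l < r) NE l))
          (r2 : 'cV[R]_Nlam),
     exists dx : 'cV[R]_(\sum_(l < r) Nx l),
       strict_local_minimizer
         (fun x => 2^-1 * (x^T *m H *m x) 0 0 + (g^T *m x) 0 0)
         (fun x => J *m x = r1 /\ A *m x = r2) dx).
Proof.
move=> H_sym H J A Hbar Abar W Jbar Hbar_unit Jbar_free pos_index _ _.
have dim : (\sum_l inertia_pos (Hbar l) + inertia_pos W)%N = \sum_l Nx l.
  apply/eqP; rewrite -eqz_nat PoszD pos_index (big_morph Posz PoszD (erefl 0%:Z)).
  by rewrite addrC subrK.
have H_pos := nullspace_posdef H_sym Hbar_unit dim.
split => // g r1 r2; apply: qp_strict_local_minimizer H_pos Jbar_free _.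
  by rewrite tr_mxdiag; apply/eq_mxdiagP => l; rewrite H_sym.
by move=> x; rewrite mul_col_mx; split => [[-> ->] | /eq_col_mx].
Qed.
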